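(* Assume the standing hypotheses (H). Let $Z_3$ be a set of exactly $\lfloor 2k_3/3\rfloor$ parts of size $3$ and $Z_4$ a set of exactly $\max\{0,\frac{k_1-k_3+k_4+1}{3}\}$ parts of size $4$ (under (H) this number is a nonnegative integer at most $k_4$). Let $M$ be a merging of $G$, with $t_3$ the number of parts of size $3$ containing a pair of $M$, satisfying: (P1) $t_3\ge k_3/3$; (P2) every part of size $4$ contains at least one pair of $M$; (P3) for every part $A$ and distinct $x,y,z\in A^*$: $|L(x)\cup L(y)\cup L(z)|\ge n-t_3-k_4$; (P4) for every part $A$ of size $3$ containing no pair of $M$ and all $x,y\in A^*$ with $x\neq y$: $|L(x)\cup L(y)|\ge k+k_3+k_4$; (P5) for every $A\in Z_3$ and distinct $x,y\in A^*$: $|L(x)\cup L(y)|\ge k+t_3+k_4$; (P6) for every part $A$ of size $3$ and distinct $x,y\in A^*$: $|L(x)\cup L(y)|\ge k+\frac{k_3}{3}+k_4$; (P7) for every $A\in Z_4$ and distinct $x,y\in A^*$: $|L(x)\cup L(y)|\ge k+k_4$; (P8) the family $(L(w))_{w}$ indexed by the merged vertices $w$ has a system of distinct representatives. Then the family $(L(x))_{x\in V^*}$ of all lists after merging has a system of distinct representatives (and hence $G$ has an $L$-coloring).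
   Context: A list assignment $L$ assigns to each vertex $v$ a set $L(v)$ of colors; an $L$-coloring is a proper coloring $f$ with $f(v)\in L(v)$ for all $v$; $\mathrm{ch}$ denotes choice number and $\chi$ chromatic number. A part of a complete multipartite graph is one of its maximal stable sets. Standing hypotheses (H): $k\ge1$ and $n\ge 2k+2$ are integers; $G$ is a complete $k$-partite graph (exactly $k$ nonempty parts) on $n$ vertices; $L$ is a list assignment for $G$ with $|L(v)|\ge\lceil (n+k-1)/3\rceil$ for every vertex $v$; $G$ has no $L$-coloring; $\left|\bigcup_{v\in V(G)}L(v)\right|\le n-1$; and every graph $H$ with fewer than $n$ vertices satisfies $\mathrm{ch}(H)\le\max\{\chi(H),\lceil(|V(H)|+\chi(H)-1)/3\rceil\}$. For $i\in\{1,2,3,4\}$, $k_i$ denotes the number of parts of $G$ of size $i$. A merging $M$ of $G$ is a collection of pairwise disjoint $2$-element sets of vertices, each contained in a single part. Merging replaces each pair $\{u,v\}\in M$ by a single new (merged) vertex $w$ with list $L(w)=L(u)\cap L(v)$; vertices in no pair of $M$ remain (unmerged) with their original lists. $V^*$ is the resulting vertex set, and for a part $A$, $A^*$ is the set of vertices of $V^*$ arising from $A$ (merged vertices from pairs in $A$ together with unmerged vertices of $A$). A system of distinct representatives (SDR) of a family $(X_i)_{i\in I}$ of sets is a choice of elements $x_i\in X_i$ that are pairwise distinct. *)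

From mathcomp Require Import all_boot.
Set Implicit Arguments. Unset Strict Implicit. Unset Printing Implicit Defensive.

Definition ceil_div (a b : nat) : nat := (a + b - 1) %/ b.

Definition proper_col (T : finType) (C : eqType) (e : rel T) (f : T -> C) : Prop :=
  forall x y, e x y -> f x != f y.

(* H is m-choosable: every list assignment with lists of size >= m admits
   a proper colouring from the lists.  ch(H) <= m  iff  H is m-choosable
   (the choice number is the least such m, and choosability is monotone). *)
Definition choosable (T : finType) (e : rel T) (m : nat) : Prop :=
  forall (C : finType) (L : T -> {set C}),
    (forall v, m <= #|L v|) ->
    exists f : T -> C, (forall v, f v \in L v) /\ proper_col e f.

Definition colorableb (T : finType) (e : rel T) (c : nat) : bool :=
  [exists f : {ffun T -> 'I_c}, [forall x, [forall y, e x y ==> (f x != f y)]]].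

(* chromatic number: least c (<= #|T|) such that H is c-colourable
   (for a loopless graph such a c always exists, so this is chi(H)). *)
Definition chi (T : finType) (e : rel T) : nat :=
  find (colorableb e) (iota 0 #|T|.+1).

Definition fiber (V : finType) (k : nat) (part : V -> 'I_k) (i : 'I_k) : {set V} :=
  [set v | part v == i].

Definition psize (V : finType) (k : nat) (part : V -> 'I_k) (i : 'I_k) : nat :=
  #|fiber part i|.

Definition kcount (V : finType) (k : nat) (part : V -> 'I_k) (j : nat) : nat :=
  #|[set i : 'I_k | psize part i == j]|.

(* ---- mergings: M is a set of 2-element vertex sets ---- *)

Definition Vstar (V : finType) (M : {set {set V}}) : {set {set V}} :=
  M :|: [set [set v] | v in ~: cover M].

Definition Lstar (V C : finType) (L : V -> {set C}) (X : {set V}) : {set C} :=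
  \bigcap_(v in X) L v.

Definition Astar (V : finType) (k : nat) (part : V -> 'I_k) (M : {set {set V}})
  (i : 'I_k) : {set {set V}} :=
  [set X in Vstar M | X \subset fiber part i].

Definition has_pair (V : finType) (k : nat) (part : V -> 'I_k) (M : {set {set V}})
  (i : 'I_k) : bool :=
  [exists X in M, X \subset fiber part i].

Definition t3 (V : finType) (k : nat) (part : V -> 'I_k) (M : {set {set V}}) : nat :=
  #|[set i : 'I_k | (psize part i == 3) && has_pair part M i]|.

(* The proof applies Hall's marriage theorem, proved first by the classical
   induction (split along a tight subfamily, or reserve one colour when
   every subfamily has a surplus).  We then record the bookkeeping on part
   sizes (k = k_1 + ... + k_4, n = k_1 + 2 k_2 + 3 k_3 + 4 k_4) and the
   consequences of minimality: no colour lies in three lists of one part or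
   in all lists of a part with two or more vertices (colour those vertices
   alike and the rest by minimality), hence parts have at most four vertices
   and the two lists of a part of size 2 are disjoint.  After basic facts on
   mergings, Hall's condition for a family [S] of vertices of [V^*] is
   checked by cases: merged vertices only (P8); three vertices of [S] in one
   part (P3); otherwise the parts meeting [S] twice are controlled by the
   weakest of them, through (P4)-(P7). *)
From mathcomp Require Import all_boot zify.
Set Implicit Arguments. Unset Strict Implicit. Unset Printing Implicit Defensive.

Section HallTheorem.
Variables (I C : finType).
Implicit Types (P S T : {set I}) (F : I -> {set C}) (B : {set C}).

Definition is_sdr P F (g : I -> C) : Prop :=
  (forall i, i \in P -> g i \in F i) /\ {in P &, injective g}.

Definition hall_condition P F : Prop :=
  forall S, S \subset P -> #|S| <= #|\bigcup_(i in S) F i|.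

Lemma sdr_hall_condition P F g : is_sdr P F g -> hall_condition P F.
Proof.
move=> [gF g_inj] S sSP.
rewrite -(card_in_imset (sub_in2 (subsetP sSP) g_inj)).
apply/subset_leq_card/subsetP => _ /imsetP [i iS ->].
by apply/bigcupP; exists i => //; apply/gF/(subsetP sSP).
Qed.

Lemma bigcup_setD T F B :
  \bigcup_(i in T) (F i :\: B) = (\bigcup_(i in T) F i) :\: B.
Proof.
apply/setP=> x; rewrite inE; apply/bigcupP/andP.
- by case=> i iT /setDP [xF xB]; split=> //; apply/bigcupP; exists i.
- by case=> xB /bigcupP [i iT xF]; exists i; rewrite // inE xB.
Qed.

Lemma sdr_glue P S F B g1 g2 :
  S \subset P -> is_sdr S (fun i => F i :&: B) g1 ->
  is_sdr (P :\: S) (fun i => F i :\: B) g2 ->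
  is_sdr P F (fun i => if i \in S then g1 i else g2 i).
Proof.
move=> sSP [g1F g1_inj] [g2F g2_inj].
have g1B i : i \in S -> g1 i \in B by move/g1F/setIP => [].
have g2B i : i \in P -> i \notin S -> g2 i \notin B.
  by move=> iP iS; have /g2F/setDP [] : i \in P :\: S by rewrite inE iS.
split=> [i iP | i j iP jP /=].
  case: ifP => iS; first by have /setIP [] := g1F i iS.
  by have /g2F/setDP [] : i \in P :\: S by rewrite inE iS.
case: ifP => iS; case: ifP => jS.
- exact: g1_inj.
- by move=> gij; have := g2B j jP (negbT jS); rewrite -gij g1B.
- by move=> gij; have := g2B i iP (negbT iS); rewrite gij g1B.
- by apply: g2_inj; rewrite inE ?iS ?jS.
Qed.

Lemma hall_condition_tight P S F :
  hall_condition P F -> S \subset P ->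
  #|\bigcup_(i in S) F i| <= #|S| ->
  hall_condition (P :\: S) (fun i => F i :\: \bigcup_(i in S) F i).
Proof.
move=> hP sSP; set B := \bigcup_(i in S) F i => tightS T sTPS.
have sTP : T \subset P by apply: subset_trans sTPS (subsetDl _ _).
have dTS : [disjoint T & S].
  by rewrite disjoints_subset (subset_trans sTPS) // setDE subsetIr.
have := hP (T :|: S); rewrite subUset sTP sSP bigcup_setU => /(_ isT).
rewrite bigcup_setD cardsU (disjoint_setI0 dTS) cards0 subn0 -/B.
have := cardsU (\bigcup_(i in T) F i) B; have := cardsD (\bigcup_(i in T) F i) B.
have := subset_leq_card (subsetIl (\bigcup_(i in T) F i) B).
have := subset_leq_card (subsetIr (\bigcup_(i in T) F i) B).
lia.
Qed.

Lemma hall_condition_slack P F i0 a :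
  hall_condition P F -> i0 \in P ->
  (forall S, S \subset P -> S != set0 -> S != P ->
     #|S| < #|\bigcup_(i in S) F i|) ->
  hall_condition (P :\ i0) (fun i => F i :\: [set a]).
Proof.
move=> hP i0P surplus T sT.
have [->|[j jT]] := set_0Vmem T; first by rewrite cards0.
have sTP : T \subset P by apply: subset_trans sT (subsetDl _ _).
have TP : T != P.
  apply: contraTneq i0P => eTP; apply/negP; rewrite -eTP => i0T.
  by have := subsetP sT i0 i0T; rewrite !inE eqxx.
have T0 : T != set0 by apply/set0Pn; exists j.
rewrite bigcup_setD; have := surplus T sTP T0 TP.
by have := cardsD1 a (\bigcup_(i in T) F i); case: (a \in _) => /=; lia.
Qed.

Lemma sdr_set0 (c0 : C) F : exists g, is_sdr set0 F g.
Proof. by exists (fun=> c0); split=> [i|i j]; rewrite inE. Qed.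

(* Hall's marriage theorem, by strong induction on [#|P|]: either some proper
   nonempty subfamily is tight, and we split along it, or every one has a
   surplus, and any colour can be assigned to any member first. *)
Theorem hall (c0 : C) P F : hall_condition P F -> exists g, is_sdr P F g.
Proof.
move: {2}#|P| (leqnn #|P|) => m; elim: m P F => [|m IH] P F leP hP.
  by move: leP; rewrite leqn0 cards_eq0 => /eqP ->; apply: sdr_set0.
have [->|[i0 i0P]] := set_0Vmem P; first exact: sdr_set0.
case: (boolP [exists S : {set I}, [&& S \subset P, S != set0, S != P &
                #|\bigcup_(i in S) F i| <= #|S|]]).
  case/existsP=> S /and4P [sSP S0 SP tightS].
  have ltSP : #|S| < #|P| by rewrite proper_card // properEneq SP.
  have [g1 [g1F g1_inj]] : exists g, is_sdr S F g.
    by apply: IH; [lia | move=> T sTS; apply/hP/(subset_trans sTS)].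
  have [g2 sdr2] : exists g,
      is_sdr (P :\: S) (fun i => F i :\: \bigcup_(i in S) F i) g.
    apply: IH (hall_condition_tight hP sSP tightS).
    have S_gt0 : 0 < #|S| by rewrite card_gt0.
    by have := cardsD P S; rewrite (setIidPr sSP); lia.
  eexists; apply: (sdr_glue (g1 := g1) sSP _ sdr2).
  split=> // i iS; rewrite inE g1F //=.
  exact: subsetP (bigcup_sup i iS) _ (g1F i iS).
rewrite negb_exists => /forallP noTight.
have surplus S : S \subset P -> S != set0 -> S != P ->
    #|S| < #|\bigcup_(i in S) F i|.
  by move=> sSP S0 SP; have := noTight S; rewrite sSP S0 SP /= -ltnNge.
have /card_gt0P [a aF] : 0 < #|F i0|.
  by have := hP [set i0]; rewrite sub1set i0P big_set1 cards1; apply.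
have [g2 sdr2] : exists g, is_sdr (P :\ i0) (fun i => F i :\: [set a]) g.
  apply: IH (hall_condition_slack a hP i0P surplus).
  by have := cardsD1 i0 P; rewrite i0P; lia.
eexists; apply: (sdr_glue (S := [set i0]) (g1 := fun=> a) _ _ sdr2).
  by rewrite sub1set.
by split=> [i /set1P ->|i j /set1P -> /set1P ->]; rewrite // inE aF set11.
Qed.

End HallTheorem.

Lemma sum_indicator (T : finType) (A : {pred T}) (P : pred T) :
  \sum_(x in A) (P x : nat) = #|[set x in A | P x]|.
Proof. by rewrite -sum1dep_card big_mkcondr; apply: eq_bigr => x _; case: (P x). Qed.

Lemma sum_lists_le_twice (V C : finType) (L : V -> {set C}) (A : {set V})
    (U : {set C}) :
  (forall v, L v \subset U) -> (forall a, #|[set v in A | a \in L v]| <= 2) ->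
  \sum_(v in A) #|L v| <= 2 * #|U|.
Proof.
move=> LU twice.
have -> : \sum_(v in A) #|L v| = \sum_(v in A) \sum_(a in U) (a \in L v : nat).
  apply: eq_bigr => v _; rewrite sum_indicator; apply: eq_card => a.
  by rewrite !inE; case aL: (a \in L v); rewrite ?andbF // (subsetP (LU v)).
rewrite exchange_big mulnC -sum_nat_const; apply: leq_sum => a _.
rewrite sum_indicator; apply: leq_trans (twice a); apply: subset_leq_card.
by apply/subsetP => v; rewrite !inE.
Qed.

Section PartSizes.
Variables (V : finType) (k : nat) (part : V -> 'I_k).

Lemma sum_psize : \sum_i psize part i = #|V|.
Proof.
have -> : \sum_i psize part i = \sum_i \sum_v (part v == i : nat).
  by apply: eq_bigr => i _; rewrite sum_indicator; apply: eq_card => v; rewrite !inE.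
rewrite exchange_big -sum1_card; apply: eq_bigr => v _.
rewrite sum_indicator -(cards1 (part v)); apply: eq_card => j.
by rewrite !inE eq_sym.
Qed.

Lemma sum_by_psize (g : nat -> nat) : (forall i, psize part i <= 4) ->
  \sum_i g (psize part i) = \sum_(j < 5) g j * kcount part j.
Proof.
move=> le4.
have -> : \sum_i g (psize part i) = \sum_i \sum_(j < 5) (psize part i == j : nat) * g j.
  apply: eq_bigr => i _; rewrite !big_ord_recr big_ord0 /=.
  by have := le4 i; case: (psize part i) => [|[|[|[|[|?]]]]] //= _; lia.
rewrite exchange_big; apply: eq_bigr => j _.
rewrite -big_distrl sum_indicator mulnC; congr (_ * _).
Qed.

Lemma part_counts : (forall i, 0 < psize part i <= 4) ->
  k = kcount part 1 + kcount part 2 + kcount part 3 + kcount part 4 /\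
  #|V| = kcount part 1 + 2 * kcount part 2 + 3 * kcount part 3
         + 4 * kcount part 4.
Proof.
move=> size14; have le4 i : psize part i <= 4 by case/andP: (size14 i).
have k0 : kcount part 0 = 0.
  apply/eqP; rewrite cards_eq0; apply/eqP/setP => i; rewrite !inE.
  by have /andP [] := size14 i; case: eqP => // ->.
have := sum_by_psize (fun=> 1) le4; have := sum_by_psize id le4.
rewrite sum_psize sum_nat_const card_ord muln1 !big_ord_recr !big_ord0 /= k0.
lia.
Qed.

End PartSizes.

Lemma colorableb_map (T : finType) (e : rel T) p (f : T -> 'I_p) :
  (forall x y, e x y -> f x != f y) -> colorableb e p.
Proof.
move=> fP; apply/existsP; exists [ffun t => f t].
by apply/forallP => x; apply/forallP => y; apply/implyP; rewrite !ffunE; apply: fP.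
Qed.

Lemma chi_le (T : finType) (e : rel T) p : colorableb e p -> chi e <= p.
Proof.
move=> col_p; rewrite /chi; case: (ltnP #|T| p) => leTp.
  by apply: leq_trans (find_size _ _) _; rewrite size_iota.
by rewrite leqNgt; apply/negP => /(before_find 0); rewrite nth_iota // add0n col_p.
Qed.

Lemma list_size_bounds k n : 2 * k + 2 <= n ->
  k + 1 <= ceil_div (n + k - 1) 3 /\ n + k - 1 <= 3 * ceil_div (n + k - 1) 3.
Proof. by rewrite /ceil_div; split; lia. Qed.

Definition outside_rel (V : finType) (k : nat) (part : V -> 'I_k) (X : {set V})
  : rel {v : V | v \notin X} := [rel x y | part (val x) != part (val y)].
Arguments outside_rel {V k} part X.

Section MinimalCounterexample.
Variables (k n : nat) (V C : finType) (part : V -> 'I_k) (L : V -> {set C}).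
Hypothesis hn : 2 * k + 2 <= n.
Hypothesis hV : #|V| = n.
Hypothesis hL : forall v, ceil_div (n + k - 1) 3 <= #|L v|.
Hypothesis hnocol : ~ exists f : V -> C,
  (forall v, f v \in L v) /\ (forall u v, part u != part v -> f u != f v).
Hypothesis hmin : forall (T : finType) (e : rel T), symmetric e -> irreflexive e ->
  #|T| < n -> choosable e (maxn (chi e) (ceil_div (#|T| + chi e - 1) 3)).

Let c := ceil_div (n + k - 1) 3.

Lemma chi_outside (X : {set V}) : chi (outside_rel part X) <= k.
Proof. by apply/chi_le/(colorableb_map (f := fun t => part (val t))). Qed.

Lemma chi_outside_part i : chi (outside_rel part (fiber part i)) <= k.-1.
Proof.
have off_i (t : {v | v \notin fiber part i}) : part (val t) != i.
  by have := valP t; rewrite inE.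
apply/chi_le/(@colorableb_map _ _ k.-1
  (fun t => Ordinal (unlift_subproof (exist (fun j => j != i) _ (off_i t))))).
move=> x y; rewrite /outside_rel /= => /eqP pxy.
apply/eqP => /(congr1 val) /= /(congr1 (bump i)).
rewrite !unbumpK ?inE; try exact: off_i.
by move=> epxy; apply/pxy/val_inj.
Qed.

Lemma extend_by_colour (X : {set V}) (i : 'I_k) (a : C) (f : {v | v \notin X} -> C) :
  X \subset fiber part i -> (forall v, v \in X -> a \in L v) ->
  (forall t, f t \in L (val t) :\ a) ->
  (forall x y, outside_rel part X x y -> f x != f y) -> False.
Proof.
move=> sX aX fL fP; apply: hnocol.
exists (fun v => if insub v is Some t then f t else a); split.
  move=> v; case: insubP => [t _ <-|]; last by rewrite negbK; apply: aX.
  by have /setD1P [] := fL t.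
move=> u v puv; case: insubP => [tu _ ut|]; case: insubP => [tv _ vt|].
- by apply: fP; rewrite /outside_rel /= ut vt.
- by have /setD1P [] := fL tu.
- by have /setD1P [] := fL tv; rewrite eq_sym.
- rewrite !negbK => vX uX; move: puv; have := subsetP sX _ uX.
  by have := subsetP sX _ vX; rewrite !inE => /eqP -> /eqP ->; rewrite eqxx.
Qed.

(* Otherwise colour those vertices alike and the rest by minimality. *)
Lemma no_common_colour (X : {set V}) (i : 'I_k) (a : C) :
  X \subset fiber part i -> (forall v, v \in X -> a \in L v) ->
  3 <= #|X| \/ (X = fiber part i /\ 2 <= #|X|) -> False.
Proof.
move=> sX aX bigX.
have [ck c3] := list_size_bounds hn.
have cardT : #|{: {v : V | v \notin X}}| = n - #|X|.
  rewrite card_sig -hV -(cardsC X) addKn.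
  by apply: eq_card => v; rewrite !inE.
have chi_small : chi (outside_rel part X) + 3 <= k + #|X|.
  case: bigX => [X3 | [eX X2]]; first by have := chi_outside X; lia.
  by have := chi_outside_part i; rewrite -eX; have := ltn_ord i; lia.
have sym : symmetric (outside_rel part X) by move=> x y; rewrite /outside_rel /= eq_sym.
have irr : irreflexive (outside_rel part X) by move=> x; rewrite /outside_rel /= eqxx.
have [f [fL fP]] : exists f, (forall t, f t \in L (val t) :\ a) /\
    proper_col (outside_rel part X) f.
  apply: (hmin sym irr) => [|t]; first by rewrite cardT; lia.
  have := cardsD1 a (L (val t)); have := hL (val t).
  have : (a \in L (val t)) <= 1 by case: (a \in _).
  rewrite -/c geq_max /ceil_div cardT.
  by have := chi_outside X; move=> *; apply/andP; split; lia.
exact: extend_by_colour sX aX fL fP.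
Qed.

Lemma colour_in_part_le2 i a : #|[set v in fiber part i | a \in L v]| <= 2.
Proof.
rewrite leqNgt; apply/negP => X3.
apply: (no_common_colour (i := i) (a := a) _ _ (or_introl X3)).
- by apply/subsetP => v; rewrite inE => /andP [].
- by move=> v; rewrite inE => /andP [].
Qed.

Lemma part2_disjoint_lists i u w :
  psize part i = 2 -> u \in fiber part i -> w \in fiber part i -> u != w ->
  L u :&: L w = set0.
Proof.
move=> size2 ui wi uw; apply/eqP/negPn/negP => /set0Pn [a /setIP [au aw]].
have euw : [set u; w] = fiber part i.
  apply/eqP; rewrite eqEcard cards2 uw -/(psize part i) size2 andbT.
  by apply/subsetP => v /set2P [->|->].
apply: (no_common_colour (X := [set u; w]) (i := i) (a := a)).
- by rewrite euw.
- by move=> v /set2P [->|->].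
- by right; rewrite cards2 uw.
Qed.

Hypothesis hunion : #|\bigcup_(v : V) L v| <= n - 1.

(* Counting the lists inside a part against the palette: parts have at most
   four vertices. *)
Lemma psize_le4 i : psize part i <= 4.
Proof.
have [ck c3] := list_size_bounds hn.
have psize_c j : psize part j * c <= 2 * (n - 1).
  have := sum_lists_le_twice (A := fiber part j) (fun v => bigcup_sup v isT)
    (colour_in_part_le2 j).
  have : \sum_(v in fiber part j) c <= \sum_(v in fiber part j) #|L v|.
    exact: leq_sum.
  by rewrite sum_nat_const -/(psize part j); lia.
have le5 j : psize part j <= 5.
  rewrite leqNgt; apply/negP => ge6; have := leq_mul ge6 (leqnn c).
  by have := psize_c j; have := ltn_ord j; lia.
have n_le : n <= 5 * k.
  have : \sum_(j < k) psize part j <= \sum_(j < k) 5 by apply: leq_sum.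
  by rewrite sum_psize sum_nat_const card_ord hV mulnC.
rewrite leqNgt; apply/negP => ge5; have := leq_mul ge5 (leqnn c).
by have := psize_c i; have := le5 i; lia.
Qed.

End MinimalCounterexample.

Section Merging.
Variables (V : finType) (k : nat) (part : V -> 'I_k) (M : {set {set V}}).
Hypothesis hM : forall X, X \in M -> #|X| = 2 /\ exists i, X \subset fiber part i.
Hypothesis hMdisj : trivIset M.

Lemma VstarP X :
  X \in Vstar M -> X \in M \/ exists2 u, u \notin cover M & X = [set u].
Proof.
rewrite inE => /orP [XM|/imsetP [u]]; [by left | rewrite inE => uM ->].
by right; exists u.
Qed.

Lemma Vstar_neq0 X : X \in Vstar M -> X != set0.
Proof.
case/VstarP => [/hM [X2 _]|[u _ ->]]; last by apply/set0Pn; exists u; rewrite inE.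
by apply/eqP => X0; move: X2; rewrite X0 cards0.
Qed.

Lemma Vstar_in_Astar X : X \in Vstar M -> exists i, X \in Astar part M i.
Proof.
move=> XV; rewrite /Astar; have [XM|[u _ eX]] := VstarP XV.
  by have [_ [i Xi]] := hM XM; exists i; rewrite inE XV.
by exists (part u); rewrite inE XV eX sub1set inE eqxx.
Qed.

Lemma Vstar_disjoint X Y :
  X \in Vstar M -> Y \in Vstar M -> X != Y -> [disjoint X & Y].
Proof.
have unmerged u Z : u \notin cover M -> Z \in M -> u \notin Z.
  by move=> uM ZM; apply: contra uM => uZ; apply/bigcupP; exists Z.
move=> /VstarP [XM|[u uM ->]] /VstarP [YM|[w wM ->]] XY.
- exact: (trivIsetP hMdisj).
- by rewrite disjoint_sym disjoints1 unmerged.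
- by rewrite disjoints1 unmerged.
- by rewrite disjoints1 inE; apply: contra XY => /eqP ->.
Qed.

Lemma card_Vstar : #|Vstar M| <= #|V| - #|M|.
Proof.
have cover2 : #|cover M| = 2 * #|M|.
  by rewrite -(eqP hMdisj) mulnC -sum_nat_const; apply: eq_bigr => X /hM [].
rewrite /Vstar; apply: leq_trans (leq_card_setU _ _).1 _.
rewrite card_imset; last exact: set1_inj.
by have := cardsC (cover M); have := max_card (cover M); lia.
Qed.

Lemma card_has_pair (Q : {set 'I_k}) :
  (forall i, i \in Q -> has_pair part M i) -> #|Q| <= #|M|.
Proof.
move=> Qpair; pose pick_pair i := odflt set0 [pick X in M | X \subset fiber part i].
have pick_pairP i : i \in Q -> pick_pair i \in M /\ pick_pair i \subset fiber part i.
  move/Qpair/existsP => [X /andP [XM Xi]]; rewrite /pick_pair.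
  by case: pickP => [Y /andP [] //|/(_ X)]; rewrite XM Xi.
rewrite -(card_in_imset (f := pick_pair)).
  by apply/subset_leq_card/subsetP => _ /imsetP [i iQ ->]; case: (pick_pairP i iQ).
move=> i j iQ jQ eij; have [iM si] := pick_pairP i iQ; have [_ sj] := pick_pairP j jQ.
have /set0Pn [v vi] : pick_pair i != set0.
  by apply/eqP => i0; have := (hM iM).1; rewrite i0 cards0.
have := subsetP si v vi; rewrite eij in vi; have := subsetP sj v vi.
by rewrite !inE => /eqP <- /eqP ->.
Qed.

Lemma Astar_size1 i X Y : psize part i = 1 ->
  X \in Astar part M i -> Y \in Astar part M i -> X = Y.
Proof.
have whole Z : psize part i = 1 -> Z \in Astar part M i -> Z = fiber part i.
  rewrite inE => size1 /andP [ZV Zi]; apply/eqP.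
  by rewrite eqEcard Zi -/(psize part i) size1 card_gt0 Vstar_neq0.
by move=> size1 XA YA; rewrite (whole X size1 XA) (whole Y size1 YA).
Qed.

Lemma Astar_size2 i X Y : psize part i = 2 ->
  X \in Astar part M i -> Y \in Astar part M i -> X != Y ->
  exists u w, [/\ X = [set u], Y = [set w], u \in fiber part i,
                  w \in fiber part i & u != w].
Proof.
move=> size2 /setIdP [XV Xi] /setIdP [YV Yi] XY.
have dXY := Vstar_disjoint XV YV XY.
have unmerged Z W : Z \in Vstar M -> W \in Vstar M -> Z \subset fiber part i ->
    W \subset fiber part i -> [disjoint Z & W] -> Z \notin M.
  move=> ZV WV Zi Wi dZW; apply/negP => ZM.
  have eZ : Z = fiber part i.
    by apply/eqP; rewrite eqEcard Zi -/(psize part i) size2 (hM ZM).1.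
  have /set0Pn [w wW] := Vstar_neq0 WV.
  by rewrite eZ in dZW; have := disjointFr dZW (subsetP Wi w wW); rewrite wW.
have [XM|[u _ eX]] := VstarP XV; first by rewrite (negbTE (unmerged _ _ XV YV Xi Yi dXY)) in XM.
have [YM|[w _ eY]] := VstarP YV.
  by rewrite disjoint_sym in dXY; rewrite (negbTE (unmerged _ _ YV XV Yi Xi dXY)) in YM.
exists u, w; move: Xi Yi XY; rewrite eX eY !sub1set => ui wi uw.
by split=> //; apply: contra uw => /eqP ->.
Qed.

Lemma card_le_parts_twice (S : {set {set V}}) : S \subset Vstar M ->
  (forall i, #|S :&: Astar part M i| <= 2) ->
  #|S| <= k + #|[set i | 1 < #|S :&: Astar part M i|]|.
Proof.
move=> sSV le2.
have : #|S| <= \sum_i #|S :&: Astar part M i|.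
  have -> : \sum_i #|S :&: Astar part M i| = \sum_i \sum_(X in S) (X \in Astar part M i : nat).
    by apply: eq_bigr => i _; rewrite sum_indicator; apply: eq_card => X; rewrite !inE.
  rewrite exchange_big -sum1_card; apply: leq_sum => X XS.
  have [i XA] := Vstar_in_Astar (subsetP sSV X XS).
  by rewrite (bigD1 i) //= XA leq_addr.
have : \sum_i #|S :&: Astar part M i| <= \sum_i (1 + (1 < #|S :&: Astar part M i|)).
  by apply: leq_sum => i _; have := le2 i; case: ltnP => /=; lia.
rewrite big_split sum_nat_const card_ord muln1 sum_indicator /=.
by move=> le1 le0; apply: leq_trans le0 (leq_trans le1 _).
Qed.

End Merging.

Section HallConditionAfterMerging.
Variables (k n : nat) (V C : finType) (part : V -> 'I_k) (L : V -> {set C})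
  (Z3 Z4 : {set 'I_k}) (M : {set {set V}}).
Hypothesis hn : 2 * k + 2 <= n.
Hypothesis hV : #|V| = n.
Hypothesis hparts : forall i : 'I_k, exists v : V, part v = i.
Hypothesis hL : forall v, ceil_div (n + k - 1) 3 <= #|L v|.
Hypothesis hnocol : ~ exists f : V -> C,
  (forall v, f v \in L v) /\ (forall u v, part u != part v -> f u != f v).
Hypothesis hunion : #|\bigcup_(v : V) L v| <= n - 1.
Hypothesis hmin : forall (T : finType) (e : rel T), symmetric e -> irreflexive e ->
  #|T| < n -> choosable e (maxn (chi e) (ceil_div (#|T| + chi e - 1) 3)).
Hypothesis hZ3 : Z3 \subset [set i | psize part i == 3].
Hypothesis hZ3c : #|Z3| = (2 * kcount part 3) %/ 3.
Hypothesis hZ4 : Z4 \subset [set i | psize part i == 4].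
Hypothesis hZ4c : 3 * #|Z4| = (kcount part 1 + kcount part 4 + 1) - kcount part 3.
Hypothesis hM : forall X, X \in M -> #|X| = 2 /\ exists i, X \subset fiber part i.
Hypothesis hMdisj : trivIset M.
Hypothesis P2 : forall i, psize part i = 4 -> has_pair part M i.
Hypothesis P3 : forall i x y z, x \in Astar part M i -> y \in Astar part M i ->
  z \in Astar part M i -> x != y -> x != z -> y != z ->
  n - t3 part M - kcount part 4 <= #|Lstar L x :|: Lstar L y :|: Lstar L z|.
Hypothesis P4 : forall i x y, psize part i = 3 -> ~~ has_pair part M i ->
  x \in Astar part M i -> y \in Astar part M i -> x != y ->
  k + kcount part 3 + kcount part 4 <= #|Lstar L x :|: Lstar L y|.
Hypothesis P5 : forall i x y, i \in Z3 ->
  x \in Astar part M i -> y \in Astar part M i -> x != y ->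
  k + t3 part M + kcount part 4 <= #|Lstar L x :|: Lstar L y|.
Hypothesis P6 : forall i x y, psize part i = 3 ->
  x \in Astar part M i -> y \in Astar part M i -> x != y ->
  3 * k + kcount part 3 + 3 * kcount part 4 <= 3 * #|Lstar L x :|: Lstar L y|.
Hypothesis P7 : forall i x y, i \in Z4 ->
  x \in Astar part M i -> y \in Astar part M i -> x != y ->
  k + kcount part 4 <= #|Lstar L x :|: Lstar L y|.
Hypothesis P8 : exists g : {set V} -> C,
  (forall X, X \in M -> g X \in Lstar L X) /\ {in M &, injective g}.

Let c := ceil_div (n + k - 1) 3.

Let U (S : {set {set V}}) := \bigcup_(X in S) Lstar L X.

Lemma Lstar1 u : Lstar L [set u] = L u.
Proof. by rewrite /Lstar big_set1. Qed.

Lemma psize_bounds i : 0 < psize part i <= 4.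
Proof.
have [v vi] := hparts i.
rewrite (psize_le4 hn hV hL hnocol hmin hunion) andbT card_gt0.
by apply/set0Pn; exists v; rewrite inE vi.
Qed.

Lemma t3_k4_le_card_M : t3 part M + kcount part 4 <= #|M|.
Proof.
set Q3 := [set i | (psize part i == 3) && has_pair part M i].
set Q4 := [set i | psize part i == 4].
have Q34 : Q3 :&: Q4 = set0.
  by apply/setP => i; rewrite !inE; case: eqP => // ->; rewrite andbF.
have <- : #|Q3 :|: Q4| = t3 part M + kcount part 4.
  by rewrite cardsU Q34 cards0 subn0.
apply: (card_has_pair hM) => i; rewrite !inE => /orP [/andP [] //|/eqP].
exact: P2.
Qed.

(* Two vertices of [A^*] in a part of size 2 are unmerged vertices with
   disjoint lists, so their lists together have at least [2c] colours. *)
Lemma part2_union_large i x y : psize part i = 2 ->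
  x \in Astar part M i -> y \in Astar part M i -> x != y ->
  2 * c <= #|Lstar L x :|: Lstar L y|.
Proof.
move=> size2 xA yA xy.
have [u [w [-> -> ui wi uw]]] := Astar_size2 hM hMdisj size2 xA yA xy.
rewrite !Lstar1 cardsU (part2_disjoint_lists hn hV hL hnocol hmin size2 ui wi uw).
by rewrite cards0 subn0 mul2n -addnn leq_add.
Qed.

Let D (S : {set {set V}}) := [set i | 1 < #|S :&: Astar part M i|].

Lemma twice_part_certifies S i b : i \in D S -> #|D S| <= b ->
  (forall x y, x \in Astar part M i -> y \in Astar part M i -> x != y ->
     k + b <= #|Lstar L x :|: Lstar L y|) -> k + #|D S| <= #|U S|.
Proof.
rewrite inE => /card_gt1P [x [y [/setIP [xS xA] /setIP [yS yA] xy]]] Db bound.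
rewrite (leq_trans _ (leq_trans (bound x y xA yA xy) _)) ?leq_add2l //.
by apply: subset_leq_card; rewrite subUset !(bigcup_sup _ _).
Qed.

Lemma twice_part_size i S : i \in D S -> 1 < psize part i.
Proof.
rewrite inE => /card_gt1P [x [y [/setIP [_ xA] /setIP [_ yA] xy]]].
rewrite ltnNge; apply: contra xy => le1; apply/eqP.
by apply: (Astar_size1 hM) xA yA; have := psize_bounds i; lia.
Qed.

Lemma card_twice_split S (B3 B4 : {set 'I_k}) :
  (forall j, j \in D S -> psize part j = 3 \/ psize part j = 4) ->
  (forall j, j \in D S -> psize part j = 3 -> j \in B3) ->
  (forall j, j \in D S -> psize part j = 4 -> j \in B4) ->
  #|D S| <= #|B3| + #|B4|.
Proof.
move=> D34 DB3 DB4; apply: leq_trans (leq_card_setU _ _).1.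
apply/subset_leq_card/subsetP => j jD; rewrite inE.
by case: (D34 j jD) => [/DB3|/DB4] ->; rewrite ?orbT.
Qed.

(* [k + |D S| <= |U S|] when [D S] has parts of sizes 3 and 4 only: apply
   (P4), (P5), (P6) or (P7) to the weakest part of [D S], in this order;
   when none applies, [D S] only has parts of size 4 outside [Z4], and
   [c <= |U S|] suffices. *)
Lemma parts_twice_bound34 S :
  (forall j, j \in D S -> psize part j = 3 \/ psize part j = 4) ->
  c <= #|U S| -> k + #|D S| <= #|U S|.
Proof.
move=> D34 cU; have [_ c3] := list_size_bounds hn; rewrite -/c in c3.
have [kE nE] := part_counts psize_bounds; rewrite hV in nE.
have [i /and3P [iD /eqP size3 nopair]|no4] :=
  pickP [pred i | [&& i \in D S, psize part i == 3 & ~~ has_pair part M i]].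
  apply: (twice_part_certifies (b := kcount part 3 + kcount part 4) iD).
    by apply: card_twice_split => // j _ sizej; rewrite inE sizej.
  by move=> x y xA yA xy; rewrite addnA; apply: P4 size3 nopair xA yA xy.
have [i /andP [iD iZ3]|no5] := pickP [pred i | (i \in D S) && (i \in Z3)].
  apply: (twice_part_certifies (b := t3 part M + kcount part 4) iD).
    apply: card_twice_split => // j jD sizej; rewrite inE sizej //=.
    by have := no4 j; rewrite /= jD sizej /= => /negbFE.
  by move=> x y xA yA xy; rewrite addnA; apply: P5 iZ3 xA yA xy.
have [i /andP [iD /eqP size3]|no6] :=
  pickP [pred i | (i \in D S) && (psize part i == 3)].
  apply: (twice_part_certifies (b := kcount part 3 - #|Z3| + kcount part 4) iD).
    have cZ3 : #|[set j | psize part j == 3] :\: Z3| = kcount part 3 - #|Z3|.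
      by rewrite cardsD (setIidPr hZ3).
    rewrite -cZ3; apply: card_twice_split => // j jD sizej; rewrite !inE sizej // andbT.
    by have := no5 j; rewrite /= jD /= => ->.
  move=> x y xA yA xy; have := P6 size3 xA yA xy; rewrite hZ3c; lia.
have D4 j : j \in D S -> psize part j = 4.
  by move=> jD; case: (D34 j jD) => // size3; have := no6 j; rewrite /= jD size3.
have [i /andP [iD iZ4]|no7] := pickP [pred i | (i \in D S) && (i \in Z4)].
  apply: (twice_part_certifies (b := kcount part 4) iD) => [|x y]; last exact: P7 iZ4.
  by apply/subset_leq_card/subsetP => j jD; rewrite inE D4.
have cZ4 : #|[set j | psize part j == 4] :\: Z4| = kcount part 4 - #|Z4|.
  by rewrite cardsD (setIidPr hZ4).
have : #|D S| <= kcount part 4 - #|Z4|.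
  rewrite -cZ4; apply/subset_leq_card/subsetP => j jD; rewrite !inE D4 // andbT.
  by have := no7 j; rewrite /= jD /= => ->.
lia.
Qed.

(* [k + |D S| <= |U S|]: a part of size 2 in [D S] has two disjoint lists
   with [2c > 2k] colours in all; otherwise its parts have sizes 3 and 4. *)
Lemma parts_twice_bound S : c <= #|U S| -> k + #|D S| <= #|U S|.
Proof.
move=> cU; have [ck _] := list_size_bounds hn; rewrite -/c in ck.
have [i /andP [iD /eqP size2]|no2] :=
  pickP [pred i | (i \in D S) && (psize part i == 2)].
  apply: (twice_part_certifies iD (max_card _)) => x y xA yA xy.
  by have := part2_union_large size2 xA yA xy; rewrite card_ord; lia.
apply: parts_twice_bound34 cU => j jD.
have := no2 j; have := twice_part_size jD; have := psize_bounds j.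
by rewrite /= jD /=; case: eqP; lia.
Qed.

(* Families of merged
   vertices are handled by (P8); otherwise [S] has an unmerged vertex, so
   [c <= |U S|].  Three vertices of [S] in one part give, by (P3),
   [|S| <= |V^*| <= n - |M| <= n - t_3 - k_4 <= |U S|]; otherwise [S] has
   at most [k + |D S|] vertices. *)
Lemma hall_condition_Vstar : hall_condition (Vstar M) (Lstar L).
Proof.
move=> S sSV; have [g [gM g_inj]] := P8.
have [sSM|/subsetPn [X XS XM]] := boolP (S \subset M).
  exact: (sdr_hall_condition (conj gM g_inj)).
have cU : c <= #|U S|.
  have [|[u _ eX]] := VstarP (subsetP sSV X XS); first by rewrite (negbTE XM).
  by apply: leq_trans (hL u) (subset_leq_card _); rewrite -Lstar1 -eX bigcup_sup.
have [/existsP [i three]|] := boolP [exists i, 2 < #|S :&: Astar part M i|].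
  have [x [y [z [[/setIP [xS xA] /setIP [yS yA] /setIP [zS zA]] [xy yz zx]]]]] :=
    card_gt2P three.
  have xz : x != z by rewrite eq_sym.
  apply: leq_trans (subset_leq_card sSV) _.
  apply: leq_trans (card_Vstar hM hMdisj) _; rewrite hV.
  apply: leq_trans (leq_trans _ (P3 xA yA zA xy xz yz)) _.
    by rewrite -subnDA leq_sub2l // t3_k4_le_card_M.
  by apply: subset_leq_card; rewrite !subUset !(bigcup_sup _ _).
rewrite negb_exists => /forallP le2.
have {}le2 i : #|S :&: Astar part M i| <= 2 by rewrite leqNgt le2.
exact: leq_trans (card_le_parts_twice hM hMdisj sSV le2) (parts_twice_bound cU).
Qed.

End HallConditionAfterMerging.

Theorem lemma18 (k n : nat) (V C : finType) (part : V -> 'I_k)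
  (L : V -> {set C}) (Z3 Z4 : {set 'I_k}) (M : {set {set V}})
  (* standing hypotheses (H) *)
  (hk : 1 <= k)
  (hn : 2 * k + 2 <= n)
  (hV : #|V| = n)
  (hparts : forall i : 'I_k, exists v : V, part v = i)
  (hL : forall v, ceil_div (n + k - 1) 3 <= #|L v|)
  (hnocol : ~ exists f : V -> C,
      (forall v, f v \in L v) /\ (forall u v, part u != part v -> f u != f v))
  (hunion : #|\bigcup_(v : V) L v| <= n - 1)
  (hmin : forall (T : finType) (e : rel T), symmetric e -> irreflexive e ->
      #|T| < n -> choosable e (maxn (chi e) (ceil_div (#|T| + chi e - 1) 3)))
  (* Z_3 and Z_4 *)
  (hZ3 : Z3 \subset [set i | psize part i == 3])
  (hZ3c : #|Z3| = (2 * kcount part 3) %/ 3)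
  (hZ4 : Z4 \subset [set i | psize part i == 4])
  (hZ4c : 3 * #|Z4| = (kcount part 1 + kcount part 4 + 1) - kcount part 3)
  (* M is a merging *)
  (hM : forall X, X \in M -> #|X| = 2 /\ exists i, X \subset fiber part i)
  (hMdisj : trivIset M)
  (* (P1) *)
  (P1 : kcount part 3 <= 3 * t3 part M)
  (* (P2) *)
  (P2 : forall i, psize part i = 4 -> has_pair part M i)
  (* (P3) *)
  (P3 : forall i x y z, x \in Astar part M i -> y \in Astar part M i ->
      z \in Astar part M i -> x != y -> x != z -> y != z ->
      n - t3 part M - kcount part 4 <= #|Lstar L x :|: Lstar L y :|: Lstar L z|)
  (* (P4) *)
  (P4 : forall i x y, psize part i = 3 -> ~~ has_pair part M i ->
      x \in Astar part M i -> y \in Astar part M i -> x != y ->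
      k + kcount part 3 + kcount part 4 <= #|Lstar L x :|: Lstar L y|)
  (* (P5) *)
  (P5 : forall i x y, i \in Z3 ->
      x \in Astar part M i -> y \in Astar part M i -> x != y ->
      k + t3 part M + kcount part 4 <= #|Lstar L x :|: Lstar L y|)
  (* (P6) : |L(x) u L(y)| >= k + k_3/3 + k_4, multiplied by 3 *)
  (P6 : forall i x y, psize part i = 3 ->
      x \in Astar part M i -> y \in Astar part M i -> x != y ->
      3 * k + kcount part 3 + 3 * kcount part 4 <= 3 * #|Lstar L x :|: Lstar L y|)
  (* (P7) *)
  (P7 : forall i x y, i \in Z4 ->
      x \in Astar part M i -> y \in Astar part M i -> x != y ->
      k + kcount part 4 <= #|Lstar L x :|: Lstar L y|)
  (* (P8) : SDR for the lists of merged vertices *)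
  (P8 : exists g : {set V} -> C,
      (forall X, X \in M -> g X \in Lstar L X) /\ {in M &, injective g}) :
  exists g : {set V} -> C,
    (forall X, X \in Vstar M -> g X \in Lstar L X) /\ {in Vstar M &, injective g}.
Proof.
have [ck _] := list_size_bounds hn.
have /card_gt0P [v0 _] : 0 < #|V| by rewrite hV (leq_trans _ hn) // addn2.
have /card_gt0P [c0 _] : 0 < #|L v0|.
  by apply: leq_trans (hL v0); apply: leq_trans ck; rewrite addn1.
have hall_cond := hall_condition_Vstar hn hV hparts hL hnocol hunion hmin hZ3 hZ3c
  hZ4 hZ4c hM hMdisj P2 P3 P4 P5 P6 P7 P8.
by have [g g_sdr] := hall c0 hall_cond; exists g.
Qed.
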